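(* Let $n\geqslant 3$, let $\lambda\in\mathcal{D}_n$ have length $\ell\geqslant 3$, set $r=2\lfloor(\ell+1)/2\rfloor$ and $\lambda_j=0$ for $j>\ell$. Then $$\sum_{j=1}^{r-1}(-1)^{j-1}\,\partial_{\Box}\bigl(\widetilde{P}_{\lambda_j,\lambda_r}(X)\bigr)\cdot\partial_{\Box}\bigl(\widetilde{P}_{\lambda\smallsetminus\{\lambda_j,\lambda_r\}}(X)\bigr)=0$$ in $A[X]$, where $A=\mathbb{Z}[\tfrac12]$.
   Context: $X=(x_1,\ldots,x_n)$. $\mathcal{D}_n$ is the set of strict partitions with all parts $\leqslant n$. $\widetilde{P}$-polynomials: $\widetilde{P}_0(X)=1$, $\widetilde{P}_i(X)=e_i(X)/2$ for $i>0$ ($e_i$ elementary symmetric); for $i\geqslant j\geqslant 0$, $\widetilde{P}_{i,j}(X)=\widetilde{P}_i\widetilde{P}_j+2\sum_{k=1}^{j-1}(-1)^k\widetilde{P}_{i+k}\widetilde{P}_{j-k}+(-1)^j\widetilde{P}_{i+j}$ (so $\widetilde P_{i,0}=\widetilde P_i$); for a partition $\mu$ of length $m$, $\widetilde{P}_\mu(X)=\mathrm{Pfaffian}[\widetilde{P}_{\mu_i,\mu_j}(X)]_{1\leqslant i<j\leqslant 2\lfloor(m+1)/2\rfloor}$. For strict partitions, $\lambda\smallsetminus\mu$ is the partition whose parts are the parts of $\lambda$ that are not parts of $\mu$. The operator $\partial_\Box$ on $A[X]$ is $\partial_\Box(f)=(f-s_\Box f)/(x_1+x_2)$, where $s_\Box$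 sends $(x_1,x_2)\mapsto(-x_2,-x_1)$ and fixes $x_3,\ldots,x_n$. (For nonzero $\mu\in\mathcal{D}_{n-1}$, $\partial_\Box(\widetilde P_\mu(X))$ equals the type $D$ Schubert polynomial $\mathfrak{D}'_\mu(X)=\mathfrak{D}_{w_\mu s_\Box}(X)$ representing a Schubert class on $SO_{2n}/B$.) *)

From HB Require Import structures.
From mathcomp Require Import all_boot all_order all_algebra.
From mathcomp Require Import mpoly.
From Stdlib Require Import ClassicalEpsilon.
Set Implicit Arguments. Unset Strict Implicit. Unset Printing Implicit Defensive.
Import Order.TTheory GRing.Theory Num.Theory.
Local Open Scope ring_scope.

(* Coefficient ring: A = Z[1/2] is realized inside rat.
   Polynomials in X = (x_1,...,x_n) are {mpoly rat[n]}, with x_{i+1} = 'X_i. *)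
Notation poly n := {mpoly rat[n]}.

Definition Pt1 (n : nat) (i : nat) : poly n :=
  if i == 0%N then 1 else (2%:R^-1 : rat) *: mesym n rat i.

(* \widetilde P_{i,j}(X) (used for i >= j >= 0). *)
Definition Pt2 (n : nat) (i j : nat) : poly n :=
  Pt1 n i * Pt1 n j
  + 2%:R * (\sum_(1 <= k < j) (-1) ^+ k * Pt1 n (i + k) * Pt1 n (j - k))
  + (-1) ^+ j * Pt1 n (i + j).

(* Pfaffian of the skew matrix with upper entries a_{ij} = f s_i s_j (i<j),
   defined by the standard Laplace expansion along the first row:
   Pf(A) = sum_{j>=2} (-1)^j a_{1j} Pf(A with rows/cols 1,j removed),
   Pf(empty) = 1.  The fuel argument k is set to size s. *)
Fixpoint pf_aux (R : ringType) (f : nat -> nat -> R) (k : nat) (s : seq nat) : R :=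
  match k, s with
  | 0%N, _ => 1
  | k'.+1, [::] => 1
  | k'.+1, a :: t =>
      \sum_(j < size t)
        (-1) ^+ j * f a (nth 0%N t j) * pf_aux f k' (take j t ++ drop j.+1 t)
  end.

Definition pfaffian (R : ringType) (f : nat -> nat -> R) (s : seq nat) : R :=
  pf_aux f (size s) s.

Definition evenup (m : nat) : nat := (2 * ((m + 1) %/ 2))%N.

Definition pad (mu : seq nat) : seq nat := mu ++ nseq (evenup (size mu) - size mu) 0%N.

Definition Ptilde (n : nat) (mu : seq nat) : poly n := pfaffian (Pt2 n) (pad mu).

Definition strict_part_le (n : nat) (lam : seq nat) : bool :=
  sorted (fun a b => b < a)%N lam && all (fun a => (0 < a <= n)%N) lam.

Definition sbox_subst (n : nat) : n.-tuple (poly n) :=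
  [tuple (if val i == 0%N then - 'X_(insubd i 1%N)
          else if val i == 1%N then - 'X_(insubd i 0%N)
          else 'X_i) | i < n].

Definition sbox (n : nat) (f : poly n) : poly n := f \mPo sbox_subst n.

Definition x12 (n : nat) : poly n := \sum_(i : 'I_n | (val i < 2)%N) 'X_i.

(* partial_Box f = (f - s_Box f)/(x_1 + x_2): the (unique, the ring being a
   domain) polynomial g with (x_1+x_2) g = f - s_Box f. *)
Definition dbox (n : nat) (f : poly n) : poly n :=
  epsilon (inhabits 0) (fun g : poly n => x12 n * g = f - sbox f).

From HB Require Import structures.
From mathcomp Require Import all_boot all_order all_algebra.
From mathcomp Require Import mpoly ring zify.
From Stdlib Require Import ClassicalEpsilon.
Set Implicit Arguments. Unset Strict Implicit. Unset Printing Implicit Defensive.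
Import GRing.Theory Num.Theory.
Local Open Scope ring_scope.

(* Write y = x_1 + x_2, z = x_1 x_2 and s = s_Box.  Splitting the generating
   function of the e_k as (1 + y t + z t^2) G(t) with G fixed by s gives
   2 P_i = A_i + y B_i with A_i, B_i fixed by s, and a telescoping computation
   turns this into 2 (P_{a,b} - s P_{a,b}) = y h(a,b) for b < a, where
   h(a,b) = al_a be_b - al_b be_a has rank two.  Expanding the Pfaffian along
   its first row, such a perturbation contributes only to first order, since
   the second-order terms cancel by the Plucker relation
   h(w,x) h(y,z) + h(w,y) h(z,x) + h(w,z) h(x,y) = 0; so 2 d_Box(P_mu) is the
   derivative of the Pfaffian of s P_{.,.} in the direction h.  Substituted into
   the left-hand side, this makes it an alternating triple sum of
   h(lam_r, .) h(., .) Pf(...), which vanishes by the same relation. *)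

Definition rmnth (j : nat) (s : seq nat) := take j s ++ drop j.+1 s.

Lemma size_rmnth j s : (j < size s)%N -> size (rmnth j s) = (size s).-1.
Proof. by move=> ltjs; rewrite size_cat size_take ltjs size_drop; lia. Qed.

Lemma rmnth0 a s : rmnth 0 (a :: s) = s.
Proof. by rewrite /rmnth /= drop0. Qed.

Lemma rmnthS j a s : rmnth j.+1 (a :: s) = a :: rmnth j s.
Proof. by []. Qed.

Lemma rmnth_subseq j s : subseq (rmnth j s) s.
Proof.
rewrite -{2}(cat_take_drop j s) /rmnth; apply: cat_subseq => //.
by rewrite -add1n -drop_drop drop_subseq.
Qed.

Lemma filter_neq_nth (s : seq nat) j : uniq s -> (j < size s)%N ->
  [seq x <- s | x != nth 0%N s j] = rmnth j s.
Proof.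
elim: s j => [|a s IHs] [|j] //= /andP [as_ us] ltjs.
  rewrite eqxx rmnth0; apply/all_filterP/allP => x xs.
  by apply: contraNneq as_ => <-.
rewrite rmnthS IHs //; case: eqP => // eq_a.
by move: as_; rewrite eq_a mem_nth.
Qed.

Arguments rmnth : simpl never.

Lemma gtn_trans : transitive gtn.
Proof. by move=> y x z lt_yx lt_zy; apply: ltn_trans lt_zy lt_yx. Qed.

Lemma evenupE m : evenup m = (m + odd m)%N.
Proof. by rewrite /evenup; have := odd_double_half m; case: (odd m) => /=; rewrite -muln2; lia. Qed.

Lemma pad_even u : ~~ odd (size u) -> pad u = u.
Proof. by rewrite /pad evenupE => /negbTE ->; rewrite addn0 subnn cats0. Qed.

Lemma take_gt_nth s k : sorted gtn s -> all (fun x => 0 < x)%N s ->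
  all (fun x => nth 0 s k < x)%N (take k s).
Proof.
move=> sorted_s pos_s; apply/(all_nthP 0) => i; rewrite size_take_min leq_min.
case/andP=> lt_ik lt_is; rewrite nth_take //; case: (ltnP k (size s)) => [lt_ks | le_sk].
  by apply: (sorted_ltn_nth gtn_trans).
by rewrite nth_default //; apply: (all_nthP 0 pos_s).
Qed.

Lemma filter_neq_nth_take s k : (size s <= k.+1)%N -> sorted gtn s ->
  all (fun x => 0 < x)%N s -> [seq x <- s | x != nth 0 s k] = take k s.
Proof.
move=> le_sk sorted_s pos_s; rewrite -[X in filter _ X](cat_take_drop k s) filter_cat.
have -> : [seq x <- drop k s | x != nth 0 s k] = [::].
  case: (ltnP k (size s)) => [lt_ks | ?]; last by rewrite drop_oversize.
  by rewrite (drop_nth 0 lt_ks) drop_oversize //= eqxx.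
rewrite cats0; apply/all_filterP; apply: sub_all (take_gt_nth k sorted_s pos_s).
by move=> x /gtn_eqF ->.
Qed.

Section Pfaffian.
Variable R : comNzRingType.
Implicit Types (f : nat -> nat -> R) (u : seq nat).

Definition altsum u (F : nat -> seq nat -> R) :=
  \sum_(j < size u) (-1) ^+ j * F (nth 0%N u j) (rmnth j u).

Lemma eq_altsum_in u F G :
  (forall x v, x \in u -> subseq v u -> size v = (size u).-1 -> F x v = G x v) ->
  altsum u F = altsum u G.
Proof.
move=> eqFG; apply: eq_bigr => j _; have ltju := ltn_ord j.
by rewrite eqFG ?mem_nth ?rmnth_subseq ?size_rmnth.
Qed.

Lemma altsumD u F G :
  altsum u (fun x v => F x v + G x v) = altsum u F + altsum u G.
Proof. by rewrite -big_split; apply: eq_bigr => j _; rewrite mulrDr. Qed.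

Lemma altsumN u F : altsum u (fun x v => - F x v) = - altsum u F.
Proof. by rewrite -sumrN; apply: eq_bigr => j _; rewrite mulrN. Qed.

Lemma altsumMl u c F : altsum u (fun x v => c * F x v) = c * altsum u F.
Proof. by rewrite mulr_sumr; apply: eq_bigr => j _; rewrite mulrCA. Qed.

Lemma eq_altsum u F G : F =2 G -> altsum u F = altsum u G.
Proof. by move=> eqFG; apply: eq_bigr => j _; rewrite eqFG. Qed.

Lemma altsum_nil F : altsum [::] F = 0.
Proof. exact: big_ord0. Qed.

Lemma altsum_cons a u F :
  altsum (a :: u) F = F a u - altsum u (fun x v => F x (a :: v)).
Proof.
rewrite /altsum big_ord_recl /= expr0 mul1r rmnth0 -sumrN.
by congr (_ + _); apply: eq_bigr => j _; rewrite /bump /= rmnthS exprS mulN1r mulNr.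
Qed.

Lemma pf_aux_fuel f k k' u : (size u <= k)%N -> (size u <= k')%N ->
  pf_aux f k u = pf_aux f k' u.
Proof.
elim: k k' u => [|k IHk] [|k'] [|a u] //= le_uk le_uk'.
apply: eq_bigr => j _; have ltju := ltn_ord j.
by congr (_ * _); apply: IHk; rewrite size_rmnth //; lia.
Qed.

Lemma pfaffian_nil f : pfaffian f [::] = 1.
Proof. by []. Qed.

Lemma pfaffian_cons f a u :
  pfaffian f (a :: u) = altsum u (fun b v => f a b * pfaffian f v).
Proof.
rewrite /pfaffian /altsum /=; apply: eq_bigr => j _; have ltju := ltn_ord j.
by rewrite -mulrA; congr (_ * (_ * _)); apply: pf_aux_fuel; rewrite size_rmnth //; lia.
Qed.

Lemma rmorph_pfaffian (s : {rmorphism R -> R}) f u :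
  s (pfaffian f u) = pfaffian (fun a b => s (f a b)) u.
Proof.
have [m] := ubnP (size u); elim: m u => // m IHm [|a u] /ltnSE le_um; first exact: rmorph1.
rewrite !pfaffian_cons rmorph_sum; apply: eq_bigr => j _; have ltju := ltn_ord j.
by rewrite !rmorphM rmorph_sign IHm // size_rmnth //; move: le_um => /=; lia.
Qed.

End Pfaffian.

Section AlternatingSums.
Variable R : comNzRingType.
Implicit Types (u : seq nat).

Definition altsum2 u (F : nat -> nat -> seq nat -> R) :=
  altsum u (fun x v => altsum v (F x)).

Definition altsum3 u (F : nat -> nat -> nat -> seq nat -> R) :=
  altsum u (fun x v => altsum2 v (F x)).

Lemma altsum2_cons a u F :
  altsum2 (a :: u) F = altsum u (F a) - altsum u (fun x v => F x a v)
                       + altsum2 u (fun x y v => F x y (a :: v)).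
Proof.
rewrite /altsum2 altsum_cons (eq_altsum _ (fun x v => altsum_cons a v (F x))).
by rewrite altsumD altsumN opprD opprK addrA.
Qed.

Lemma altsum2_swap u F : altsum2 u (fun x y v => F y x v) = - altsum2 u F.
Proof.
elim: u F => [|a u IHu] F; first by rewrite /altsum2 !altsum_nil oppr0.
rewrite !altsum2_cons (IHu (fun x y v => F x y (a :: v))).
by rewrite opprD opprB.
Qed.

Lemma altsum3_swap12 u P : altsum3 u (fun x y z v => P y x z v) = - altsum3 u P.
Proof. exact: (altsum2_swap u (fun x y w => altsum w (P x y))). Qed.

Lemma altsum3_swap23 u P : altsum3 u (fun x y z v => P x z y v) = - altsum3 u P.
Proof. by rewrite /altsum3 -altsumN; apply: eq_altsum => x v; apply: altsum2_swap. Qed.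

Lemma altsum3_rotate u P : altsum3 u (fun x y z v => P y z x v) = altsum3 u P.
Proof.
by rewrite (altsum3_swap12 u (fun x y z v => P x z y v)) altsum3_swap23 opprK.
Qed.

Lemma altsum3D u P Q :
  altsum3 u (fun x y z v => P x y z v + Q x y z v) = altsum3 u P + altsum3 u Q.
Proof.
rewrite /altsum3 -altsumD; apply: eq_altsum => x v.
by rewrite /altsum2 -altsumD; apply: eq_altsum => y w; apply: altsumD.
Qed.

Lemma altsum3_cyclic_eq0 u P :
  (forall x y z v, P x y z v + P y z x v + P z x y v = 0) -> 3%:R * altsum3 u P = 0.
Proof.
move=> cyclic0.
have rot1 : altsum3 u P = altsum3 u (fun x y z v => P y z x v) by rewrite (altsum3_rotate u P).
have rot2 : altsum3 u P = altsum3 u (fun x y z v => P z x y v).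
  by rewrite -(altsum3_rotate u (fun x y z v => P z x y v)).
rewrite mulr_natl mulrS mulr2n {2}rot1 {2}rot2.
rewrite -!altsum3D /altsum3 /altsum2 /altsum big1 // => j _; rewrite big1 ?mulr0 // => k _.
by rewrite big1 ?mulr0 // => m _; rewrite addrA cyclic0 mulr0.
Qed.

Lemma altsum3_mull1 u c P :
  altsum3 u (fun x y z v => c x * P x y z v) = altsum u (fun x v => c x * altsum2 v (P x)).
Proof.
apply: eq_altsum => x v; rewrite -altsumMl.
by apply: eq_altsum => y w; apply: altsumMl.
Qed.

End AlternatingSums.

Definition wedge (R : comNzRingType) (al be : nat -> R) x y := al x * be y - al y * be x.

Lemma wedgeN (R : comNzRingType) (al be : nat -> R) x y :
  wedge al be y x = - wedge al be x y.
Proof. by rewrite /wedge opprB. Qed.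

Lemma wedge_plucker (R : comNzRingType) (al be : nat -> R) w x y z :
  wedge al be w x * wedge al be y z + wedge al be w y * wedge al be z x
  + wedge al be w z * wedge al be x y = 0.
Proof. by rewrite /wedge; ring. Qed.

Section DecomposableForm.
Variables (R : comNzRingType) (g h : nat -> nat -> R).
Hypothesis hN : forall x y, h y x = - h x y.
Hypothesis h_plucker :
  forall w x y z, h w x * h y z + h w y * h z x + h w z * h x y = 0.

(* Twice the derivative of the Pfaffian at [g] in the direction [h]: [altsum2]
   meets each pair of indices twice. *)
Definition dpfaffian u := altsum2 u (fun x y v => h x y * pfaffian g v).

Lemma altsum_dpfaffian_plucker w u :
  3%:R * altsum u (fun x v => h w x * dpfaffian v) = 0.
Proof.
rewrite -(altsum3_mull1 u (h w) (fun x y z v => h y z * pfaffian g v)).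
by apply: altsum3_cyclic_eq0 => x y z v; rewrite !mulrA -!mulrDl h_plucker mul0r.
Qed.

Lemma dpfaffian_cons a u :
  dpfaffian (a :: u) = 2%:R * altsum u (fun x v => h a x * pfaffian g v)
                       + altsum u (fun x v => g a x * dpfaffian v).
Proof.
rewrite /dpfaffian altsum2_cons.
have -> : altsum u (fun x v => h x a * pfaffian g v)
          = - altsum u (fun x v => h a x * pfaffian g v).
  by rewrite -altsumN; apply: eq_altsum => x v; rewrite hN mulNr.
rewrite opprK mulr_natl mulr2n.
congr (_ + _).
transitivity (altsum3 u (fun x y z v => h x y * (g a z * pfaffian g v))).
  by apply: eq_altsum => x v; apply: eq_altsum => y w; rewrite pfaffian_cons altsumMl.
rewrite -(altsum3_rotate u (fun x y z v => h x y * (g a z * pfaffian g v))).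
rewrite -(altsum3_mull1 u (g a) (fun x y z v => h y z * pfaffian g v)).
by apply: eq_altsum => x v; apply: eq_altsum => y w; apply: eq_altsum => z t; apply: mulrCA.
Qed.

End DecomposableForm.

Section PfaffianPerturbation.
Variables (R : idomainType) (s : {rmorphism R -> R}) (y : R) (f h : nat -> nat -> R).
Hypothesis hN : forall x y, h y x = - h x y.
Hypothesis h_plucker :
  forall w x y z, h w x * h y z + h w y * h z x + h w z * h x y = 0.
Hypotheses (two_ne0 : 2%:R != 0 :> R) (three_ne0 : 3%:R != 0 :> R).
Hypothesis f_split : forall a b, (b < a)%N -> 2%:R * (f a b - s (f a b)) = y * h a b.

Lemma pfaffian_split u : sorted gtn u ->
  4%:R * (pfaffian f u - s (pfaffian f u)) = y * dpfaffian (fun a b => s (f a b)) h u.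
Proof.
set g := fun a b => s (f a b).
have [m] := ubnP (size u); elim: m u => // m IHm [|a u] /ltnSE le_um sorted_au.
  by rewrite pfaffian_nil rmorph1 subrr mulr0 /dpfaffian /altsum2 altsum_nil mulr0.
have plucker0 : altsum u (fun x v => h a x * dpfaffian g h v) = 0.
  by move/eqP: (altsum_dpfaffian_plucker g h_plucker a u); rewrite mulf_eq0 (negbTE three_ne0) => /eqP.
rewrite rmorph_pfaffian !pfaffian_cons dpfaffian_cons //; apply: (mulfI two_ne0).
have -> : 2%:R * (4%:R * (altsum u (fun b v => f a b * pfaffian f v)
                           - altsum u (fun b v => g a b * pfaffian g v)))
        = altsum u (fun x v => 8%:R * (f a x * pfaffian f v - g a x * pfaffian g v)).
  by rewrite altsumMl altsumD altsumN mulrA -natrM.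
have -> : 2%:R * (y * (2%:R * altsum u (fun x v => h a x * pfaffian g v)
                       + altsum u (fun x v => g a x * dpfaffian g h v)))
        = altsum u (fun x v => 2%:R * y * (2%:R * (h a x * pfaffian g v) + g a x * dpfaffian g h v)
                               + y ^+ 2 * (h a x * dpfaffian g h v)).
  by rewrite altsumD !altsumMl plucker0 mulr0 addr0 altsumD altsumMl mulrA.
apply: eq_altsum_in => x v xu vu size_v.
have split_ax : 2%:R * f a x = 2%:R * g a x + y * h a x.
  have /allP/(_ x xu) := order_path_min gtn_trans sorted_au.
  by move/f_split/eqP; rewrite mulrBr subr_eq addrC => /eqP.
have split_v : 4%:R * pfaffian f v = 4%:R * pfaffian g v + y * dpfaffian g h v.
  have sorted_v := subseq_sorted gtn_trans vu (path_sorted sorted_au).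
  have lt_vm : (size v < m)%N by move: le_um; rewrite /= size_v; lia.
  have /eqP := IHm v lt_vm sorted_v.
  by rewrite rmorph_pfaffian mulrBr subr_eq addrC => /eqP.
transitivity ((2%:R * f a x) * (4%:R * pfaffian f v) - 8%:R * (g a x * pfaffian g v)).
  by ring.
by rewrite split_ax split_v; ring.
Qed.

End PfaffianPerturbation.

HB.instance Definition _ n := GRing.RMorphism.copy (@sbox n) (comp_mpoly (sbox_subst n)).

Lemma coef_prod_XaddC_mesym n k :
  (\prod_(i < n) (('X_i : {mpoly rat[n]})%:P * 'X + 1))`_k = mesym n rat k.
Proof.
rewrite bigA_distr coef_sum /mesym (big_mkcond (fun h : {set 'I_n} => #|h| == k)).
apply: eq_bigr => J _; rewrite -big_mkcond /= big_split /= prodr_const -rmorph_prod.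
by rewrite coefCM coefXn eq_sym; case: eqP => _; rewrite ?mulr1 ?mulr0.
Qed.

Lemma coefM_quadratic (R : comNzRingType) (Q : {poly R}) (a b : R) k :
  (Q * (a%:P * 'X^2 + b%:P * 'X + 1))`_k.+2 = Q`_k.+2 + b * Q`_k.+1 + a * Q`_k.
Proof.
rewrite !mulrDr mulr1 !coefD [Q * (a%:P * _)]mulrCA [Q * (b%:P * _)]mulrCA !coefCM.
by rewrite coefMX coefMXn /= subn2 /=; ring.
Qed.

Lemma natr_mpoly_neq0 n c : (0 < c)%N -> (c%:R : {mpoly rat[n]}) != 0.
Proof. by move=> c_gt0; rewrite -(rmorph_nat (@mpolyC n rat)) mpolyC_eq0 pnatr_eq0 -lt0n. Qed.

Section SBox.
Variable n : nat.
Hypothesis n_gt2 : (2 < n)%N.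

Let i0 : 'I_n := Ordinal (ltnW (ltnW n_gt2)).
Let i1 : 'I_n := Ordinal (ltnW n_gt2).
Let y : {mpoly rat[n]} := 'X_i0 + 'X_i1.
Let z : {mpoly rat[n]} := 'X_i0 * 'X_i1.

Lemma sbox_X (i : 'I_n) :
  sbox 'X_i = if val i == 0%N then - 'X_i1 else if val i == 1%N then - 'X_i0 else 'X_i.
Proof.
rewrite /sbox comp_mpolyXU /sbox_subst -tnth_nth tnth_mktuple.
by case: ifP => [_|_]; [|case: ifP => // _]; congr (- 'X_ _); apply: val_inj;
  rewrite val_insubd /= ?(ltnW n_gt2) ?(ltnW (ltnW n_gt2)).
Qed.

Lemma sbox_X_ge2 (i : 'I_n) : (2 <= i)%N -> sbox 'X_i = 'X_i.
Proof. by rewrite sbox_X; case: i => [[|[|k]]]. Qed.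

Lemma sbox_y : sbox y = - y.
Proof. by rewrite rmorphD /= !sbox_X /= opprD addrC. Qed.

Lemma sbox_z : sbox z = z.
Proof. by rewrite rmorphM /= !sbox_X /= mulrNN mulrC. Qed.

Lemma x12E : x12 n = y.
Proof.
rewrite /x12 (bigD1 i0) //= (bigD1 i1) //= big_pred0 ?addr0 // => i.
by rewrite -!val_eqE /=; case: i => [[|[|k]]].
Qed.

Lemma y_neq0 : y != 0.
Proof.
apply/negP => /eqP /(congr1 (meval (fun _ => 1 : rat))) /eqP.
by rewrite mevalD !mevalXU meval0.
Qed.

Let G : {poly {mpoly rat[n]}} := \prod_(i < n | (2 <= i)%N) (('X_i)%:P * 'X + 1).
Let E k := (G * 'X^2)`_k.

Lemma E1 : E 1 = 0. Proof. by rewrite /E coefMXn. Qed.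

Lemma E2 : E 2 = 1.
Proof.
rewrite /E coefMXn /= -horner_coef0 horner_prod big1 // => i _.
by rewrite hornerD hornerMX mulr0 add0r hornerC.
Qed.

Lemma prod_XaddC_split :
  \prod_(i < n) (('X_i : {mpoly rat[n]})%:P * 'X + 1) = (z%:P * 'X^2 + y%:P * 'X + 1) * G.
Proof.
rewrite (bigD1 i0) //= (bigD1 i1) //= mulrA; congr (_ * _).
  by rewrite /z /y polyCM polyCD; ring.
by apply: eq_bigl => i; rewrite -!val_eqE /=; case: i => [[|[|k]]].
Qed.

Lemma mesym_E k : mesym n rat k = E k.+2 + y * E k.+1 + z * E k.
Proof.
rewrite -coef_prod_XaddC_mesym prod_XaddC_split -coefM_quadratic.
by rewrite mulrAC coefMXn /= subn2 /= [G * _]mulrC.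
Qed.

Lemma sbox_E k : sbox (E k) = E k.
Proof.
have map_G : map_poly (@sbox n) G = G.
  rewrite rmorph_prod; apply: eq_bigr => i le2i.
  by rewrite rmorphD rmorphM /= map_polyC map_polyX rmorph1 /= sbox_X_ge2.
by rewrite /E -coef_map rmorphM /= map_polyXn map_G.
Qed.

Lemma Pt1_split i : (0 < i)%N -> 2%:R * Pt1 n i = E i.+2 + z * E i + y * E i.+1.
Proof.
case: i => // i _; rewrite /Pt1 /= mulr_natl scalerMnl.
have -> : (2%:R^-1 : rat) *+ 2 = 1 by apply/eqP.
by rewrite scale1r mesym_E; ring.
Qed.

Lemma sbox_Pt1_split i : (0 < i)%N -> 2%:R * sbox (Pt1 n i) = E i.+2 + z * E i - y * E i.+1.
Proof.
move=> i_gt0; rewrite -(rmorph_nat (@sbox n)) -rmorphM Pt1_split //.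
by rewrite rmorphD /= rmorphD /= rmorphM /= sbox_z rmorphM /= sbox_y !sbox_E; ring.
Qed.

Lemma Pt1_split_diff i : (0 < i)%N -> 2%:R * (Pt1 n i - sbox (Pt1 n i)) = 2%:R * y * E i.+1.
Proof. by move=> i_gt0; rewrite mulrBr Pt1_split // sbox_Pt1_split //; ring. Qed.

Let psi i j := E i.+1 * E j.+1 + z * (E i * E j).

Lemma Pt1M_split i j : (0 < i)%N -> (0 < j)%N ->
  2%:R * (Pt1 n i * Pt1 n j - sbox (Pt1 n i) * sbox (Pt1 n j)) = y * (psi i j.+1 + psi i.+1 j).
Proof.
move=> i_gt0 j_gt0; apply: (mulfI (natr_mpoly_neq0 n (isT : 0 < 2)%N)).
transitivity ((2%:R * Pt1 n i) * (2%:R * Pt1 n j)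
              - (2%:R * sbox (Pt1 n i)) * (2%:R * sbox (Pt1 n j))); first by ring.
by rewrite !Pt1_split // !sbox_Pt1_split // /psi; ring.
Qed.

Let al i := E i.+1.
(* [be 0 = 4] accounts for [Pt2 n a 0 = 2 * Pt1 n a]. *)
Let be i := if i == 0%N then 4%:R else E i.+2 - z * E i.

Lemma Pt2_split0 a : (0 < a)%N ->
  2%:R * (Pt2 n a 0 - sbox (Pt2 n a 0)) = y * wedge al be a 0.
Proof.
move=> a_gt0; have Pt1_0 : Pt1 n 0 = 1 by [].
rewrite /Pt2 big_geq // mulr0 addr0 expr0 mul1r addn0 Pt1_0 mulr1 rmorphD /=.
transitivity (2%:R * (2%:R * (Pt1 n a - sbox (Pt1 n a)))); first by ring.
by rewrite Pt1_split_diff // /wedge /al /be /= E1; ring.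
Qed.

Lemma Pt2_split_pos a b : (0 < b < a)%N ->
  2%:R * (Pt2 n a b - sbox (Pt2 n a b)) = y * wedge al be a b.
Proof.
case/andP=> b_gt0 lt_ba; rewrite /Pt2; set S : {mpoly rat[n]} := \sum_(1 <= k < b) _.
have S_split : 2%:R * (S - sbox S) = y * (- psi a.+1 b - (-1) ^+ b * E (a + b).+1).
  rewrite rmorph_sum -sumrB mulr_sumr.
  rewrite (telescope_sumr_eq (fun k => - (y * ((-1) ^+ k * psi (a + k) (b - k).+1)))) //.
    by rewrite subnn addn1 subn1 prednK // /psi E1 E2; ring.
  move=> k /andP[k_gt0 lt_kb]; rewrite !rmorphM rmorph_sign /=.
  transitivity ((-1) ^+ k * (2%:R * (Pt1 n (a + k) * Pt1 n (b - k)
                 - sbox (Pt1 n (a + k)) * sbox (Pt1 n (b - k))))); first by ring.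
  rewrite Pt1M_split; [|lia|lia].
  by rewrite addnS (_ : (b - k.+1).+1 = b - k)%N; [rewrite exprS; ring | lia].
clearbody S; rewrite !rmorphD !rmorphM rmorph_nat rmorph_sign /=.
transitivity (2%:R * (Pt1 n a * Pt1 n b - sbox (Pt1 n a) * sbox (Pt1 n b))
              + 2%:R * (2%:R * (S - sbox S))
              + (-1) ^+ b * (2%:R * (Pt1 n (a + b) - sbox (Pt1 n (a + b))))).
  by ring.
rewrite Pt1M_split ?S_split ?Pt1_split_diff; [|lia|lia|lia].
by rewrite /wedge /al /be !gtn_eqF ?(ltn_trans b_gt0 lt_ba) // /psi; ring.
Qed.

Lemma Pt2_split a b : (b < a)%N ->
  2%:R * (Pt2 n a b - sbox (Pt2 n a b)) = y * wedge al be a b.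
Proof.
by case: b => [|b] lt_ba; [apply: Pt2_split0 | apply: Pt2_split_pos; rewrite lt_ba].
Qed.

Lemma dbox_eq c p q : (0 < c)%N -> c%:R * (p - sbox p) = y * q -> c%:R * dbox p = q.
Proof.
move=> c_gt0 split_p.
have cq : c%:R * ((c%:R^-1 : rat) *: q) = q.
  rewrite -(rmorph_nat (@mpolyC n rat)) mul_mpolyC scalerA divff ?scale1r //.
  by rewrite pnatr_eq0 -lt0n.
have dbox_spec : x12 n * dbox p = p - sbox p.
  apply: (epsilon_spec (inhabits 0) (fun g => x12 n * g = p - sbox p)).
  exists ((c%:R^-1 : rat) *: q); apply: (mulfI (natr_mpoly_neq0 n c_gt0)).
  by rewrite split_p x12E -{2}cq mulrCA.
by apply: (mulfI y_neq0); rewrite mulrCA -split_p -dbox_spec x12E.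
Qed.

Lemma altsum_dbox_Pt2 t w : sorted gtn t -> all (fun x => w < x)%N t ->
  altsum t (fun x v => dbox (Pt2 n x w) * dbox (pfaffian (Pt2 n) v)) = 0.
Proof.
move=> sorted_t gt_w; set g := fun a b => sbox (Pt2 n a b).
have two := natr_mpoly_neq0 n (isT : 0 < 2)%N.
have three := natr_mpoly_neq0 n (isT : 0 < 3)%N.
apply: (mulfI (natr_mpoly_neq0 n (isT : 0 < 8)%N)); rewrite mulr0 -altsumMl.
transitivity (- altsum t (fun x v => wedge al be w x * dpfaffian g (wedge al be) v)).
  rewrite -altsumN; apply: eq_altsum_in => x v xt vt _.
  have dPt2 : 2%:R * dbox (Pt2 n x w) = wedge al be x w.
    by apply: dbox_eq => //; apply: Pt2_split; apply: (allP gt_w).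
  have dpf : 4%:R * dbox (pfaffian (Pt2 n) v) = dpfaffian g (wedge al be) v.
    apply: dbox_eq => //.
    apply: (pfaffian_split (@wedgeN _ al be) (@wedge_plucker _ al be) two three Pt2_split).
    exact (subseq_sorted gtn_trans vt sorted_t).
  by rewrite wedgeN mulNr opprK -dPt2 -dpf mulrACA -natrM.
have /eqP := altsum_dpfaffian_plucker g (@wedge_plucker _ al be) w t.
by rewrite mulf_eq0 (negbTE three) => /eqP ->; rewrite oppr0.
Qed.

End SBox.

Theorem theorem2 (n : nat) (lam : seq nat) :
  (3 <= n)%N -> strict_part_le n lam -> (3 <= size lam)%N ->
  let r := evenup (size lam) in
  let l := fun j : nat => nth 0%N lam j.-1 in
  \sum_(1 <= j < r)
     (-1) ^+ j.-1 * dbox (Pt2 n (l j) (l r))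
       * dbox (Ptilde n [seq x <- lam | (x != l j) && (x != l r)])
  = 0 :> {mpoly rat[n]}.
Proof.
move=> n_ge3 /andP[sorted_lam bounded_lam] size_lam r l.
have pos_lam : all (fun x => 0 < x)%N lam by apply: sub_all bounded_lam => x /andP[].
have r_even : ~~ odd r by rewrite /r /evenup oddM.
have /andP[r_ge r_le] : (size lam <= r <= (size lam).+1)%N.
  by rewrite /r evenupE; case: (odd _) => /=; lia.
set t := take r.-1 lam.
have size_t : size t = r.-1 by rewrite size_takel //; lia.
have sorted_t : sorted gtn t := subseq_sorted gtn_trans (take_subseq _ _) sorted_lam.
have uniq_t : uniq t := sorted_uniq gtn_trans ltnn sorted_t.
have filter_lam : [seq x <- lam | x != l r] = t.
  by apply: filter_neq_nth_take => //; rewrite prednK //; lia.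
rewrite big_add1 /= big_mkord -size_t.
rewrite -[RHS](altsum_dbox_Pt2 n_ge3 sorted_t (take_gt_nth _ sorted_lam pos_lam)).
apply: eq_bigr => j _; have lt_jt := ltn_ord j; have lt_jr : (j < r.-1)%N by rewrite -size_t.
have -> : [seq x <- lam | (x != l j.+1) && (x != l r)]
          = [seq x <- [seq x <- lam | x != l r] | x != nth 0%N t j].
  by rewrite -filter_predI nth_take.
rewrite filter_lam (filter_neq_nth uniq_t lt_jt) -mulrA (nth_take _ lt_jr) /Ptilde pad_even //.
by rewrite size_rmnth // size_t -subn2 oddB /= ?addbF //; lia.
Qed.
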